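(* Let $H$ be a complex Hilbert space with $\dim H\geq 2$, $\mathcal{A}\subseteq\mathcal{B}(H)$ a standard operator algebra, $r,s$ nonnegative integers with $r+s\geq1$, and $A\in\mathcal{A}$ nonzero. The following are equivalent: (1) $A$ has rank one; (2) for every $B\in\mathcal{A}$, $\sigma_\pi(B^rA^*B^s)$ is a singleton; (3) for every $B\in\mathcal{A}$ with $\operatorname{rank}(B)\leq2$, $\sigma_\pi(B^rA^*B^s)$ is a singleton.
   Context: A standard operator algebra on a complex Hilbert space $H$ is a subalgebra of $\mathcal{B}(H)$ containing all finite rank operators; it need not be closed or unital. $A^*$ is the Hilbert-space adjoint. The peripheral spectrum of $T$ is $\sigma_\pi(T)=\{z\in\sigma(T):|z|=r(T)\}$, where $r(T)$ is the spectral radius. *)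

From Stdlib Require Import Reals List ClassicalEpsilon.
Open Scope R_scope.
Set Implicit Arguments.

Definition C := (R * R)%type.
Definition C0 : C := (0, 0).
Definition C1 : C := (1, 0).
Definition Cadd (a b : C) : C := (fst a + fst b, snd a + snd b).
Definition Cmul (a b : C) : C :=
  (fst a * fst b - snd a * snd b, fst a * snd b + snd a * fst b).
Definition Copp (a : C) : C := (- fst a, - snd a).
Definition Cconj (a : C) : C := (fst a, - snd a).
Definition Cnorm (a : C) : R := sqrt (fst a * fst a + snd a * snd a).

Record CHilbert := {
  hv :> Type;
  hzero : hv;
  hadd : hv -> hv -> hv;
  hopp : hv -> hv;
  hscal : C -> hv -> hv;
  hinner : hv -> hv -> C;
  hadd_assoc : forall x y z, hadd x (hadd y z) = hadd (hadd x y) z;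
  hadd_comm : forall x y, hadd x y = hadd y x;
  hadd_0 : forall x, hadd x hzero = x;
  hadd_opp : forall x, hadd x (hopp x) = hzero;
  hscal_1 : forall x, hscal C1 x = x;
  hscal_assoc : forall a b x, hscal a (hscal b x) = hscal (Cmul a b) x;
  hscal_addv : forall a x y, hscal a (hadd x y) = hadd (hscal a x) (hscal a y);
  hscal_adds : forall a b x, hscal (Cadd a b) x = hadd (hscal a x) (hscal b x);
  hinner_addl : forall x y z, hinner (hadd x y) z = Cadd (hinner x z) (hinner y z);
  hinner_scall : forall a x y, hinner (hscal a x) y = Cmul a (hinner x y);
  hinner_conj : forall x y, hinner y x = Cconj (hinner x y);
  hinner_pos : forall x, 0 <= fst (hinner x x);
  hinner_def : forall x, hinner x x = C0 -> x = hzero;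
  hcomplete : forall u : nat -> hv,
    (forall eps, 0 < eps -> exists N, forall m n, (N <= m)%nat -> (N <= n)%nat ->
        sqrt (fst (hinner (hadd (u m) (hopp (u n))) (hadd (u m) (hopp (u n))))) < eps) ->
    exists l, forall eps, 0 < eps -> exists N, forall n, (N <= n)%nat ->
        sqrt (fst (hinner (hadd (u n) (hopp l)) (hadd (u n) (hopp l)))) < eps
}.

Section Ops.
Variable H : CHilbert.

Definition hnorm (x : H) : R := sqrt (fst (hinner H x x)).

Definition dim_ge2 : Prop :=
  exists x y : H, forall a b : C,
    hadd H (hscal H a x) (hscal H b y) = hzero H -> a = C0 /\ b = C0.

Definition linear_op (T : H -> H) : Prop :=
  (forall x y, T (hadd H x y) = hadd H (T x) (T y)) /\
  (forall a x, T (hscal H a x) = hscal H a (T x)).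

Definition bounded_op (T : H -> H) : Prop :=
  linear_op T /\ exists M, forall x, hnorm (T x) <= M * hnorm x.

Fixpoint lincomb (cs : list C) (ys : list H) : H :=
  match cs, ys with
  | c :: cs', y :: ys' => hadd H (hscal H c y) (lincomb cs' ys')
  | _, _ => hzero H
  end.

Definition rank_le (n : nat) (T : H -> H) : Prop :=
  exists ys : list H, length ys = n /\
    forall x, exists cs : list C, length cs = n /\ T x = lincomb cs ys.

Definition finite_rank (T : H -> H) : Prop := exists n, rank_le n T.

Definition rank_one (T : H -> H) : Prop := rank_le 1 T /\ ~ rank_le 0 T.

(* standard operator algebra: a complex subalgebra of B(H) containing
   all finite rank operators (not necessarily closed or unital) *)
Definition standard_op_alg (Alg : (H -> H) -> Prop) : Prop :=
  (forall T, Alg T -> bounded_op T) /\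
  (forall T S, Alg T -> Alg S -> Alg (fun x => hadd H (T x) (S x))) /\
  (forall a T, Alg T -> Alg (fun x => hscal H a (T x))) /\
  (forall T S, Alg T -> Alg S -> Alg (fun x => T (S x))) /\
  (forall T, bounded_op T -> finite_rank T -> Alg T).

Definition is_adjoint (T S : H -> H) : Prop :=
  forall x y, hinner H (T x) y = hinner H x (S y).

Definition adjoint (T : H -> H) : H -> H :=
  epsilon (inhabits (fun x : H => x)) (fun S => is_adjoint T S).

Fixpoint opow (n : nat) (T : H -> H) : H -> H :=
  match n with
  | O => fun x => x
  | S n' => fun x => T (opow n' T x)
  end.

Definition spectrum (T : H -> H) (z : C) : Prop :=
  ~ exists S : H -> H, bounded_op S /\
      (forall x, S (hadd H (T x) (hopp H (hscal H z x))) = x) /\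
      (forall x, hadd H (T (S x)) (hopp H (hscal H z (S x))) = x).

Definition spectral_radius (T : H -> H) (rho : R) : Prop :=
  is_lub (fun t => exists w, spectrum T w /\ t = Cnorm w) rho.

Definition periph_spectrum (T : H -> H) (z : C) : Prop :=
  spectrum T z /\ spectral_radius T (Cnorm z).

Definition periph_singleton (T : H -> H) : Prop :=
  exists z, forall w, periph_spectrum T w <-> w = z.

End Ops.

(** If A x = c(x) y then A^* z = <z, y> w, so
    T = B^r A^* B^s is the rank-one operator x |-> <B^s x, y> B^r w.  The
    spectrum of a bounded rank-one operator x |-> phi(x) Q on a space of
    dimension >= 2 is {0, phi(Q)}, whose peripheral part is {phi(Q)}.

    If A is not of rank one, S = A^* has rank >= 2.  We
    build vectors e1, e2, functionals <., p1>, <., p2> and a scalar d such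
    that B x = <x,p1> e1 + d <x,p2> e2 has B^k x = <x,p1> e1 + d^k <x,p2> e2
    and the compression of B^r S B^s to span{e1, e2} (or span{S e1, S e2})
    is a 2x2 matrix with trace 0 and nonzero determinant.  A rank-two
    operator with such a matrix has spectrum {0, lambda, -lambda} with
    lambda <> 0, so its peripheral spectrum has two points. *)

From Pilot Require Import Defs.
From Stdlib Require Import Reals List ClassicalEpsilon Lra Psatz Field Ring.
Open Scope R_scope.
Import ListNotations.

Notation CC := Defs.C.
Notation C1 := Defs.C1.
Notation C0 := Defs.C0.

(** * Complex numbers *)

Lemma Ceq (a b : CC) : fst a = fst b -> snd a = snd b -> a = b.
Proof. destruct a, b; simpl; intros; subst; reflexivity. Qed.

Definition Csub (a b : CC) : CC := Cadd a (Copp b).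
Definition Cinv (a : CC) : CC :=
  (fst a / (fst a * fst a + snd a * snd a), - snd a / (fst a * fst a + snd a * snd a)).
Definition Cdiv (a b : CC) : CC := Cmul a (Cinv b).

Lemma C_ring : ring_theory C0 C1 Cadd Cmul Csub Copp (@eq CC).
Proof.
  constructor; intros; apply Ceq; unfold Cadd, Cmul, Csub, Copp, C0, C1; simpl; ring.
Qed.

Lemma C1_neq_C0 : C1 <> C0.
Proof. unfold C1, C0; intro h; injection h; lra. Qed.

Lemma Copp_C1_neq_C0 : Copp C1 <> C0.
Proof. unfold C1, C0, Copp; intro e; injection e; lra. Qed.

Lemma Cnz_sq (a : CC) : a <> C0 -> fst a * fst a + snd a * snd a <> 0.
Proof.
  destruct a as [x y]; simpl; intros h e. apply h.
  assert (x = 0) by nra. assert (y = 0) by nra. subst; reflexivity.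
Qed.

Lemma C_field : field_theory C0 C1 Cadd Cmul Csub Copp Cdiv Cinv (@eq CC).
Proof.
  constructor.
  - exact C_ring.
  - exact C1_neq_C0.
  - reflexivity.
  - intros p hp. pose proof (Cnz_sq p hp) as hn.
    destruct p as [x y]; simpl in *. apply Ceq; unfold Cmul, Cinv, C1; simpl; field; auto.
Qed.

Add Field C_field_inst : C_field.

Lemma Cmul_eq0 a b : Cmul a b = C0 -> a = C0 \/ b = C0.
Proof.
  intro h. destruct (classic (a = C0)) as [|ha]; [left; auto|right].
  replace b with (Cmul (Cinv a) (Cmul a b)) by (field; auto). rewrite h. ring.
Qed.

Lemma C_eq_opp_0 a : a = Copp a -> a = C0.
Proof. destruct a as [x y]; intro e; injection e; intros; apply Ceq; simpl; lra. Qed.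

Lemma Ceq_of_sub a b : Csub a b = C0 -> a = b.
Proof. intro h. replace a with (Cadd (Csub a b) b) by ring. rewrite h. ring. Qed.

Lemma Cconj_add a b : Cconj (Cadd a b) = Cadd (Cconj a) (Cconj b).
Proof. apply Ceq; simpl; ring. Qed.
Lemma Cconj_mul a b : Cconj (Cmul a b) = Cmul (Cconj a) (Cconj b).
Proof. apply Ceq; simpl; ring. Qed.
Lemma Cconj_invol a : Cconj (Cconj a) = a.
Proof. apply Ceq; simpl; ring. Qed.

Definition RC (r : R) : CC := (r, 0).

Lemma Cnorm_sq a : Cnorm a * Cnorm a = fst a * fst a + snd a * snd a.
Proof. unfold Cnorm. apply sqrt_sqrt. nra. Qed.
Lemma Cnorm_ge0 a : 0 <= Cnorm a.
Proof. apply sqrt_pos. Qed.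
Lemma Cnorm_mul a b : Cnorm (Cmul a b) = Cnorm a * Cnorm b.
Proof.
  unfold Cnorm; rewrite <- sqrt_mult by nra. f_equal. destruct a, b; simpl; ring.
Qed.
Lemma Cnorm_opp a : Cnorm (Copp a) = Cnorm a.
Proof. unfold Cnorm; destruct a; simpl; f_equal; ring. Qed.
Lemma Cnorm_0 : Cnorm C0 = 0.
Proof. unfold Cnorm; simpl. replace (0*0+0*0) with 0 by ring. apply sqrt_0. Qed.
Lemma Cnorm_eq0 a : Cnorm a = 0 -> a = C0.
Proof.
  intro h. pose proof (Cnorm_sq a) as e. rewrite h in e. destruct a as [x y]; simpl in *.
  assert (x = 0) by nra. assert (y = 0) by nra. subst; reflexivity.
Qed.
Lemma Cnorm_fst a : fst a <= Cnorm a.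
Proof.
  pose proof (Cnorm_sq a). pose proof (Cnorm_ge0 a). destruct a as [x y]; simpl in *. nra.
Qed.
Lemma Cnorm_triangle a b : Cnorm (Cadd a b) <= Cnorm a + Cnorm b.
Proof.
  pose proof (Cnorm_sq a) as ha; pose proof (Cnorm_sq b) as hb; pose proof (Cnorm_sq (Cadd a b)).
  pose proof (Cnorm_ge0 a); pose proof (Cnorm_ge0 b); pose proof (Cnorm_ge0 (Cadd a b)).
  destruct a as [x y], b as [u v]; simpl in *.
  set (p := Cnorm (x,y)) in *. set (q := Cnorm (u,v)) in *.
  assert (hcs : x*u + y*v <= p*q).
  { assert ((x*u+y*v)*(x*u+y*v) <= (p*q)*(p*q)).
    { replace ((p*q)*(p*q)) with ((p*p)*(q*q)) by ring. rewrite ha, hb.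
      pose proof (pow2_ge_0 (x*v-y*u)). nra. }
    assert (0 <= p*q) by nra. nra. }
  nra.
Qed.

(** Every complex number has a square root (explicit half-angle formulas). *)
Lemma Csqrt_ex (z : CC) : exists w, Cmul w w = z.
Proof.
  destruct z as [a b].
  set (m := sqrt (a*a+b*b)).
  assert (hm : m*m = a*a+b*b) by (apply sqrt_sqrt; nra).
  assert (hm0 : 0 <= m) by apply sqrt_pos.
  assert (ha : Rabs a <= m) by (unfold Rabs; destruct Rcase_abs; nra).
  assert (h1 : 0 <= (m + a)/2) by (pose proof (Rle_abs (-a)); rewrite Rabs_Ropp in *; lra).
  assert (h2 : 0 <= (m - a)/2) by (pose proof (Rle_abs a); lra).
  set (u := sqrt ((m+a)/2)). set (v := sqrt ((m-a)/2)).
  assert (hu : u*u = (m+a)/2) by (apply sqrt_sqrt; auto).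
  assert (hv : v*v = (m-a)/2) by (apply sqrt_sqrt; auto).
  assert (huv : (u*v)*(u*v) = (b*b)/4)
    by (replace ((u*v)*(u*v)) with ((u*u)*(v*v)) by ring; rewrite hu, hv; field_simplify; nra).
  assert (hu0 : 0 <= u) by apply sqrt_pos. assert (hv0 : 0 <= v) by apply sqrt_pos.
  assert (huv2 : u*v = Rabs b / 2).
  { apply Rsqr_inj. nra. pose proof (Rabs_pos b); lra. unfold Rsqr. rewrite huv.
    replace (Rabs b / 2 * (Rabs b / 2)) with ((Rabs b * Rabs b)/4) by field.
    rewrite <- Rabs_mult, Rabs_pos_eq by nra. reflexivity. }
  destruct (Rle_dec 0 b).
  - exists (u, v). apply Ceq; simpl. nra. rewrite Rabs_pos_eq in huv2 by lra. lra.
  - exists (u, -v). apply Ceq; simpl. nra. rewrite Rabs_left in huv2 by lra. lra.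
Qed.

Fixpoint Cpow (a : CC) (n : nat) : CC := match n with O => C1 | S k => Cmul a (Cpow a k) end.

Lemma Cpow_add a m n : Cpow a (m + n) = Cmul (Cpow a m) (Cpow a n).
Proof. induction m; simpl. ring. rewrite IHm; ring. Qed.

Lemma Cpow_C1 n : Cpow C1 n = C1.
Proof. induction n; simpl; auto. rewrite IHn; ring. Qed.

Lemma Cpow_root_m1 (n : nat) : (1 <= n)%nat -> exists w, Cpow w n = Copp C1.
Proof.
  intro hn. set (t := PI / INR n). exists (cos t, sin t).
  assert (moivre : forall k, Cpow (cos t, sin t) k = (cos (INR k * t), sin (INR k * t))).
  { induction k. simpl. rewrite Rmult_0_l, cos_0, sin_0. reflexivity.
    simpl Cpow. rewrite IHk, S_INR. replace ((INR k + 1) * t) with (t + INR k * t) by ring.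
    apply Ceq; simpl; [rewrite cos_plus | rewrite sin_plus]; ring. }
  rewrite moivre. unfold t. replace (INR n * (PI / INR n)) with PI.
  - rewrite cos_PI, sin_PI. apply Ceq; simpl; ring.
  - field. apply not_0_INR. lia.
Qed.

(** * Inner-product space identities *)

Section InnerProduct.
Variable H : CHilbert.
Local Notation V := (hv H).
Local Notation "0v" := (hzero H).
Local Notation add := (hadd H).
Local Notation sc := (hscal H).
Local Notation ip := (hinner H).
Local Notation hn := (hnorm H).

Lemma add0l (x : V) : add 0v x = x.
Proof. rewrite hadd_comm; apply hadd_0. Qed.

Lemma add_cancel (z x y : V) : add z x = add z y -> x = y.
Proof.
  intro h. assert (e : add (hopp H z) (add z x) = add (hopp H z) (add z y)) by (rewrite h; auto).
  rewrite !hadd_assoc, (hadd_comm _ (hopp H z) z), hadd_opp, !add0l in e. exact e.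
Qed.

Lemma scal0 (x : V) : sc C0 x = 0v.
Proof.
  apply (add_cancel (sc C0 x)). rewrite hadd_0, <- hscal_adds. f_equal. apply Ceq; simpl; ring.
Qed.

Lemma scalv0 a : sc a 0v = 0v.
Proof. apply (add_cancel (sc a 0v)). rewrite hadd_0, <- hscal_addv, hadd_0. reflexivity. Qed.

Lemma opp_scal (x : V) : hopp H x = sc (Copp C1) x.
Proof.
  apply (add_cancel x). rewrite hadd_opp.
  transitivity (add (sc C1 x) (sc (Copp C1) x)); [| rewrite hscal_1; auto].
  rewrite <- hscal_adds. replace (Cadd C1 (Copp C1)) with C0 by ring. rewrite scal0; auto.
Qed.

Lemma add_opp_cancel (x y : V) : add x (add y (hopp H x)) = y.
Proof. rewrite (hadd_comm _ y), hadd_assoc, hadd_opp, add0l. reflexivity. Qed.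

Lemma add_swap4 (p q u v : V) : add (add p q) (add u v) = add (add p u) (add q v).
Proof.
  rewrite <- !hadd_assoc. f_equal. rewrite !hadd_assoc. f_equal. apply hadd_comm.
Qed.

Lemma ip_0l y : ip 0v y = C0.
Proof. rewrite <- (scal0 0v), hinner_scall. apply Ceq; simpl; ring. Qed.

Lemma ip_addr x y z : ip x (add y z) = Cadd (ip x y) (ip x z).
Proof. rewrite hinner_conj, hinner_addl, Cconj_add, <- !hinner_conj. reflexivity. Qed.

Lemma ip_scalr a x y : ip x (sc a y) = Cmul (Cconj a) (ip x y).
Proof. rewrite hinner_conj, hinner_scall, Cconj_mul, <- hinner_conj. reflexivity. Qed.

Lemma ip_0r x : ip x 0v = C0.
Proof. rewrite <- (scal0 0v), ip_scalr. apply Ceq; simpl; ring. Qed.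

Lemma ip_oppr x y : ip x (hopp H y) = Copp (ip x y).
Proof. rewrite opp_scal, ip_scalr. apply Ceq; simpl; ring. Qed.

Lemma ip_add_sc u v a b p :
  ip (add (sc a u) (sc b v)) p = Cadd (Cmul a (ip u p)) (Cmul b (ip v p)).
Proof. rewrite hinner_addl, !hinner_scall. auto. Qed.

Lemma ip_ext u v : (forall y, ip y u = ip y v) -> u = v.
Proof.
  intro h. set (w := add u (hopp H v)).
  assert (hw : ip w w = C0) by (unfold w at 2; rewrite ip_addr, ip_oppr, h; ring).
  apply hinner_def in hw. unfold w in hw.
  rewrite <- (add_opp_cancel v u), hw, hadd_0. reflexivity.
Qed.

Lemma ip_ext_l u v : (forall y, ip u y = ip v y) -> u = v.
Proof. intro h. apply ip_ext. intro y. rewrite (hinner_conj H u y), (hinner_conj H v y), h. auto. Qed.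

Definition Nv (x : V) : R := fst (ip x x).

Lemma ip_self x : ip x x = RC (Nv x).
Proof.
  unfold Nv, RC. pose proof (hinner_conj H x x) as e.
  destruct (ip x x) as [a b]; simpl in *. injection e; intros. apply Ceq; simpl; lra.
Qed.

Lemma Nv_ge0 x : 0 <= Nv x.
Proof. apply hinner_pos. Qed.

Lemma Nv_eq0 x : Nv x = 0 -> x = 0v.
Proof. intro h. apply hinner_def. rewrite ip_self, h. reflexivity. Qed.

Lemma Nv_pos x : x <> 0v -> 0 < Nv x.
Proof. intro h. destruct (Nv_ge0 x) as [|e]; auto. exfalso. apply h, Nv_eq0; auto. Qed.

Lemma Nv_scal a x : Nv (sc a x) = (fst a * fst a + snd a * snd a) * Nv x.
Proof. unfold Nv. rewrite hinner_scall, ip_scalr, ip_self. destruct a; unfold RC; simpl; ring. Qed.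

Lemma Nv_opp x : Nv (hopp H x) = Nv x.
Proof. rewrite opp_scal, Nv_scal. simpl. ring. Qed.

Lemma Nv_add x y : Nv (add x y) = Nv x + Nv y + 2 * fst (ip x y).
Proof.
  unfold Nv. rewrite hinner_addl, !ip_addr, (hinner_conj H x y).
  destruct (ip y x) as [a b]; simpl. ring.
Qed.

Lemma parallelogram a b :
  Nv (add a b) + Nv (add a (hopp H b)) = 2 * Nv a + 2 * Nv b.
Proof. rewrite !Nv_add, Nv_opp, ip_oppr. simpl. ring. Qed.

Lemma cauchy_schwarz_sq x y :
  fst (ip x y) * fst (ip x y) + snd (ip x y) * snd (ip x y) <= Nv x * Nv y.
Proof.
  destruct (classic (y = 0v)) as [->|h0].
  - rewrite ip_0r. unfold Nv at 2. rewrite ip_0l. simpl. nra.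
  - pose proof (Nv_pos y h0) as hy.
    (* expand 0 <= |x - t y|^2 with t = <x,y> / |y|^2 *)
    pose proof (Nv_ge0 (add x (sc (Copp (Cmul (ip x y) (RC (/ Nv y)))) y))) as hp.
    rewrite Nv_add, Nv_scal, ip_scalr in hp. unfold RC in hp.
    destruct (ip x y) as [a b]. simpl in hp |- *.
    set (n := Nv y) in *.
    assert (e : 0 <= Nv x - (a*a+b*b) / n) by (eapply Rle_trans; [exact hp | right; field; lra]).
    apply (Rmult_le_compat_r n) in e; [|lra].
    replace ((Nv x - (a*a+b*b) / n) * n) with (Nv x * n - (a*a+b*b)) in e by (field; lra).
    lra.
Qed.

Lemma hnorm_ge0 x : 0 <= hn x.
Proof. apply sqrt_pos. Qed.

Lemma hnorm_sq x : hn x * hn x = Nv x.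
Proof. apply sqrt_sqrt, Nv_ge0. Qed.

Lemma hnorm_scal a x : hn (sc a x) = Cnorm a * hn x.
Proof. unfold hnorm. fold (Nv (sc a x)) (Nv x). rewrite Nv_scal. unfold Cnorm. apply sqrt_mult; [nra | apply Nv_ge0]. Qed.

Lemma Cnorm_ip x y : Cnorm (ip x y) <= hn x * hn y.
Proof.
  unfold Cnorm, hnorm. rewrite <- sqrt_mult by apply Nv_ge0.
  apply sqrt_le_1_alt, cauchy_schwarz_sq.
Qed.

Lemma fst_ip_le x y : fst (ip x y) <= hn x * hn y.
Proof. eapply Rle_trans; [apply Cnorm_fst | apply Cnorm_ip]. Qed.

Lemma hnorm_tri x y : hn (add x y) <= hn x + hn y.
Proof.
  pose proof (hnorm_sq (add x y)) as e. rewrite Nv_add in e.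
  pose proof (hnorm_sq x); pose proof (hnorm_sq y); pose proof (fst_ip_le x y).
  pose proof (hnorm_ge0 x); pose proof (hnorm_ge0 y); pose proof (hnorm_ge0 (add x y)).
  nra.
Qed.

End InnerProduct.

(** * Bounded linear functionals and the Riesz representation theorem *)

Lemma le_of_forall_small (a b c : R) :
  0 <= c -> (forall e, 0 < e <= 1 -> a <= b + c * e) -> a <= b.
Proof.
  intros hc h. destruct (Rle_dec a b) as [|hab]; auto. exfalso.
  set (e := Rmin 1 ((a - b) / (2 * (c + 1)))).
  assert (he : 0 < e) by (apply Rmin_pos; [lra | apply Rdiv_lt_0_compat; lra]).
  assert (he1 : e <= 1) by apply Rmin_l.
  assert (he2 : e * (2 * (c + 1)) <= a - b).
  { apply Rle_trans with ((a - b) / (2 * (c + 1)) * (2 * (c + 1))).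
    - apply Rmult_le_compat_r; [lra | apply Rmin_r].
    - right; field; lra. }
  specialize (h e (conj he he1)). nra.
Qed.

Lemma inv_succ_small (e : R) : 0 < e -> exists N : nat, forall n, (N <= n)%nat -> / INR (S n) < e.
Proof.
  intro he. destruct (archimed_cor1 e he) as [N [h1 h2]]. exists N. intros n hn.
  apply Rle_lt_trans with (/ INR N); auto. apply Rinv_le_contravar.
  - apply lt_0_INR; lia.
  - apply le_INR; lia.
Qed.

Section Riesz.
Variable H : CHilbert.
Local Notation V := (hv H).
Local Notation "0v" := (hzero H).
Local Notation add := (hadd H).
Local Notation sc := (hscal H).
Local Notation ip := (hinner H).
Local Notation hn := (hnorm H).
Local Notation Nv := (Nv H).

Definition lin_fun (phi : V -> CC) : Prop :=
  (forall x y, phi (add x y) = Cadd (phi x) (phi y)) /\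
  (forall a x, phi (sc a x) = Cmul a (phi x)).

Definition bounded_functional (phi : V -> CC) : Prop :=
  lin_fun phi /\ exists K, 0 <= K /\ forall x, Cnorm (phi x) <= K * hn x.

Lemma lin_fun_0 phi : lin_fun phi -> phi 0v = C0.
Proof.
  intros [_ hs]. rewrite <- (scal0 H 0v), hs. apply Ceq; simpl; ring.
Qed.

Definition dv (a b : V) : V := add a (hopp H b).

Lemma hnorm_dv_sym a b : hn (dv a b) = hn (dv b a).
Proof.
  unfold hnorm, dv. fold (Nv (add a (hopp H b))) (Nv (add b (hopp H a))).
  rewrite !Nv_add, !Nv_opp, !ip_oppr, (hinner_conj H a b). destruct (ip b a); simpl. f_equal. ring.
Qed.

Lemma Nv_le_of_approx (l : V) (m : R) : 0 <= m ->
  (forall e, 0 < e -> exists x, hn (dv x l) < e /\ Nv x < m + e) -> Nv l <= m.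
Proof.
  intros hm happ. apply (le_of_forall_small _ _ (2 * m + 4)); [lra|]. intros e [he he1].
  destruct (happ e he) as [x [hd hx]].
  assert (hl : l = add x (dv l x)) by (symmetry; apply add_opp_cancel).
  rewrite hl, Nv_add. rewrite hnorm_dv_sym in hd.
  pose proof (fst_ip_le H x (dv l x)). pose proof (hnorm_sq H x). pose proof (hnorm_sq H (dv l x)).
  pose proof (hnorm_ge0 H x). pose proof (hnorm_ge0 H (dv l x)).
  assert (hx1 : hn x <= m + 1) by nra.
  assert (hn x * hn (dv l x) <= (m + 1) * e) by nra.
  nra.
Qed.

Section Functional.
Variable phi : V -> CC.
Hypothesis phi_bf : bounded_functional phi.

Lemma functional_closed (l : V) (c : CC) :
  (forall e, 0 < e -> exists x, hn (dv x l) < e /\ phi x = c) -> phi l = c.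
Proof.
  destruct phi_bf as [[hadd hsc] [K [hK0 hK]]]. intro happ.
  assert (hz : Cnorm (Csub (phi l) c) <= 0).
  { apply (le_of_forall_small _ _ K hK0). intros e [he _].
    destruct (happ e he) as [x [hd hx]].
    replace (Csub (phi l) c) with (Copp (phi (dv x l))).
    - rewrite Cnorm_opp. pose proof (hK (dv x l)). nra.
    - unfold dv. rewrite hadd, opp_scal, hsc, hx. unfold Csub. ring. }
  pose proof (Cnorm_eq0 _ (Rle_antisym _ _ hz (Cnorm_ge0 _))) as e.
  replace (phi l) with (Cadd (Csub (phi l) c) c) by ring. rewrite e. ring.
Qed.

Lemma hyperplane_inf (x1 : V) : phi x1 = C1 ->
  exists m, 0 <= m /\ (forall x, phi x = C1 -> m <= Nv x) /\
            (forall e, 0 < e -> exists x, phi x = C1 /\ Nv x < m + e).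
Proof.
  intro hx1. set (U := fun t => forall x, phi x = C1 -> t <= Nv x).
  destruct (completeness U) as [m [hm1 hm2]].
  { exists (Nv x1). intros t ht. apply ht; auto. }
  { exists 0. intros x _. apply Nv_ge0. }
  exists m. split; [|split].
  - apply hm1. intros x _. apply Nv_ge0.
  - intros x hx. apply hm2. intros t ht. auto.
  - intros e he. apply NNPP; intro hn0.
    assert (hU : U (m + e)).
    { intros x hx. apply Rnot_lt_le. intro hl. apply hn0. eauto. }
    apply hm1 in hU. lra.
Qed.

(** The hyperplane [phi = 1], if nonempty, has a point of minimal norm:
    a minimizing sequence is Cauchy by the parallelogram law, and its limit
    stays on the hyperplane and has norm at most the infimum. *)
Lemma hyperplane_minimizer (x1 : V) : phi x1 = C1 ->
  exists l, phi l = C1 /\ forall x, phi x = C1 -> Nv l <= Nv x.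
Proof.
  intro hx1. pose proof phi_bf as [[hadd hsc] _].
  destruct (hyperplane_inf x1 hx1) as [m [m0 [hlow happ]]].
  assert (hseq : forall k : nat, {x | phi x = C1 /\ Nv x < m + / INR (S k)}).
  { intro k. apply constructive_indefinite_description, happ.
    apply Rinv_0_lt_compat, lt_0_INR; lia. }
  set (u := fun k => proj1_sig (hseq k)).
  assert (hu : forall k, phi (u k) = C1 /\ Nv (u k) < m + / INR (S k))
    by (intro k; exact (proj2_sig (hseq k))).
  (* the midpoint of two points of the hyperplane lies on it *)
  assert (hpar : forall a b, phi a = C1 -> phi b = C1 -> Nv (dv a b) <= 2 * Nv a + 2 * Nv b - 4 * m).
  { intros a b ha hb. pose proof (parallelogram H a b).
    assert (hmid : m <= Nv (sc (RC (/2)) (add a b))).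
    { apply hlow. rewrite hsc, hadd, ha, hb. apply Ceq; unfold RC; simpl; field. }
    rewrite Nv_scal in hmid. simpl in hmid. unfold dv. lra. }
  destruct (hcomplete H u) as [l hl].
  { intros eps he. destruct (inv_succ_small (eps * eps / 4)) as [N hN]; [nra|].
    exists N. intros i j hi hj. rewrite <- (sqrt_square eps) by lra. apply sqrt_lt_1_alt.
    split; [apply hinner_pos|]. change (Nv (dv (u i) (u j)) < eps * eps).
    pose proof (hpar _ _ (proj1 (hu i)) (proj1 (hu j))).
    pose proof (proj2 (hu i)). pose proof (proj2 (hu j)). pose proof (hN i hi). pose proof (hN j hj).
    lra. }
  assert (hlim : forall e, 0 < e -> exists k, hn (dv (u k) l) < e /\ Nv (u k) < m + e).
  { intros e he. destruct (hl e he) as [N1 hN1]. destruct (inv_succ_small e he) as [N2 hN2].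
    exists (Nat.max N1 N2). split.
    - apply hN1. lia.
    - pose proof (proj2 (hu (Nat.max N1 N2))). pose proof (hN2 (Nat.max N1 N2) (Nat.le_max_r _ _)). lra. }
  exists l. split.
  - apply functional_closed. intros e he. destruct (hlim e he) as [k [hk _]].
    exists (u k). split; auto. apply hu.
  - intros x hx. apply Rle_trans with m; auto. apply Nv_le_of_approx; auto.
    intros e he. destruct (hlim e he) as [k hk]. eauto.
Qed.

Lemma minimizer_orthogonal (l : V) :
  phi l = C1 -> (forall x, phi x = C1 -> Nv l <= Nv x) ->
  forall y, phi y = C0 -> ip y l = C0.
Proof.
  pose proof phi_bf as [[hadd hsc] _]. intros hl hmin.
  (* for z in the kernel, t |-> |l + t z|^2 is minimal at t = 0 *)
  assert (hre : forall z, phi z = C0 -> fst (ip l z) = 0).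
  { intros z hz. pose proof (Nv_ge0 H z) as hz0.
    assert (hq : forall t, 0 <= 2 * t * fst (ip l z) + t * t * Nv z).
    { intro t. assert (ht : Nv l <= Nv (add l (sc (RC t) z))).
      { apply hmin. rewrite hadd, hsc, hz, hl. apply Ceq; simpl; ring. }
      rewrite Nv_add, Nv_scal, ip_scalr in ht. unfold RC in ht; simpl in ht.
      destruct (ip l z); simpl in *. nra. }
    set (a := fst (ip l z)) in *. specialize (hq (- a / (Nv z + 1))).
    replace (2 * (- a / (Nv z + 1)) * a + (- a / (Nv z + 1)) * (- a / (Nv z + 1)) * Nv z)
      with (- (a * a) * (Nv z + 2) / ((Nv z + 1) * (Nv z + 1))) in hq by (field; lra).
    assert (hd : 0 < (Nv z + 1) * (Nv z + 1)) by nra.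
    apply (Rmult_le_compat_r ((Nv z + 1) * (Nv z + 1))) in hq; [|lra].
    unfold Rdiv in hq. rewrite Rmult_0_l, Rmult_assoc, Rinv_l in hq by lra. nra. }
  intros y hy. pose proof (hre y hy) as q1.
  assert (q2 : fst (ip l (sc (0,1) y)) = 0) by (apply hre; rewrite hsc, hy; apply Ceq; simpl; ring).
  rewrite ip_scalr in q2. rewrite hinner_conj. destruct (ip l y) as [a b]; simpl in *.
  apply Ceq; simpl; lra.
Qed.

Theorem riesz : exists w, forall x, phi x = ip x w.
Proof.
  pose proof phi_bf as [[hadd hsc] _].
  destruct (classic (forall x, phi x = C0)) as [hz|hnz].
  { exists 0v. intro x. rewrite hz, ip_0r. auto. }
  apply not_all_ex_not in hnz. destruct hnz as [x0 hx0].
  destruct (hyperplane_minimizer (sc (Cinv (phi x0)) x0)) as [l [hl hmin]].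
  { rewrite hsc. field. auto. }
  assert (hl0 : l <> 0v) by (intro e; rewrite e, lin_fun_0 in hl; [apply C1_neq_C0; auto | apply phi_bf]).
  pose proof (Nv_pos H l hl0) as hN.
  exists (sc (RC (/ Nv l)) l). intro x.
  (* x - phi(x) l lies in the kernel, hence is orthogonal to l *)
  assert (hy : ip (add x (sc (Copp (phi x)) l)) l = C0).
  { apply (minimizer_orthogonal l hl hmin). rewrite hadd, hsc, hl. ring. }
  rewrite hinner_addl, hinner_scall, ip_self in hy. rewrite ip_scalr.
  unfold RC in *. destruct (ip x l) as [a b]. destruct (phi x) as [p q].
  simpl in hy. injection hy; intros h2 h1. apply Ceq; simpl;
    apply (Rmult_eq_reg_r (Nv l)); try lra; field_simplify; try lra; nra.
Qed.

End Functional.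

End Riesz.

(** * Bounded operators, functionals and adjoints *)

Section Operators.
Variable H : CHilbert.
Local Notation V := (hv H).
Local Notation "0v" := (hzero H).
Local Notation add := (hadd H).
Local Notation sc := (hscal H).
Local Notation ip := (hinner H).
Local Notation hn := (hnorm H).
Local Notation Nv := (Nv H).

Lemma lin_zero (T : V -> V) : linear_op H T -> T 0v = 0v.
Proof. intros [_ hs]. rewrite <- (scal0 H 0v) at 1. rewrite hs. apply scal0. Qed.

Lemma bound_nonneg (T : V -> V) : (exists M, forall x, hn (T x) <= M * hn x) ->
  exists M, 0 <= M /\ forall x, hn (T x) <= M * hn x.
Proof.
  intros [M hM]. exists (Rmax M 0). split; [apply Rmax_r|]. intro x.
  eapply Rle_trans; [apply hM|]. apply Rmult_le_compat_r; [apply hnorm_ge0 | apply Rmax_l].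
Qed.

Lemma bounded_id : bounded_op H (fun x => x).
Proof. split; [split; auto|]. exists 1. intro; lra. Qed.

Lemma bounded_add (f g : V -> V) : bounded_op H f -> bounded_op H g ->
  bounded_op H (fun x => add (f x) (g x)).
Proof.
  intros [[fa fs] hf] [[ga gs] hg].
  destruct (bound_nonneg f hf) as [Mf [hMf hf']]. destruct (bound_nonneg g hg) as [Mg [hMg hg']].
  split; [split|].
  - intros x y. rewrite fa, ga. apply add_swap4.
  - intros a x. rewrite fs, gs, hscal_addv. auto.
  - exists (Mf + Mg). intro x. eapply Rle_trans; [apply hnorm_tri|].
    pose proof (hf' x). pose proof (hg' x). lra.
Qed.

Lemma bounded_scal c (f : V -> V) : bounded_op H f -> bounded_op H (fun x => sc c (f x)).
Proof.
  intros [[fa fs] hf]. destruct (bound_nonneg f hf) as [M [hM0 hM]].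
  split; [split|].
  - intros x y. rewrite fa, hscal_addv. auto.
  - intros a x. rewrite fs, !hscal_assoc. f_equal. ring.
  - exists (Cnorm c * M). intro x. rewrite hnorm_scal, Rmult_assoc.
    apply Rmult_le_compat_l; [apply Cnorm_ge0 | auto].
Qed.

Lemma bounded_comp (f g : V -> V) : bounded_op H f -> bounded_op H g -> bounded_op H (fun x => f (g x)).
Proof.
  intros [[fa fs] hf] [[ga gs] hg].
  destruct (bound_nonneg f hf) as [Mf [hMf hf']]. destruct (bound_nonneg g hg) as [Mg [hMg hg']].
  split; [split|].
  - intros x y. rewrite ga, fa. auto.
  - intros a x. rewrite gs, fs. auto.
  - exists (Mf * Mg). intro x. eapply Rle_trans; [apply hf'|].
    rewrite Rmult_assoc. apply Rmult_le_compat_l; auto.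
Qed.

Lemma bounded_opow (B : V -> V) n : bounded_op H B -> bounded_op H (opow H n B).
Proof.
  intro hB. induction n as [|n IH]; simpl.
  - exact bounded_id.
  - exact (bounded_comp B (opow H n B) hB IH).
Qed.

Lemma bf_ip p : bounded_functional H (fun x => ip x p).
Proof.
  split; [split; intros; [apply hinner_addl | apply hinner_scall]|].
  exists (hn p). split; [apply hnorm_ge0|]. intro x. rewrite Rmult_comm. apply Cnorm_ip.
Qed.

Lemma bf_comp phi (B : V -> V) : bounded_functional H phi -> bounded_op H B ->
  bounded_functional H (fun x => phi (B x)).
Proof.
  intros [[pa ps] [K [hK0 hK]]] [[Ba Bs] hB]. destruct (bound_nonneg B hB) as [M [hM0 hM]].
  split; [split|].
  - intros x y. rewrite Ba, pa. auto.
  - intros a x. rewrite Bs, ps. auto.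
  - exists (K * M). split; [nra|]. intro x. eapply Rle_trans; [apply hK|].
    rewrite Rmult_assoc. apply Rmult_le_compat_l; auto.
Qed.

Lemma bf_scal c phi : bounded_functional H phi -> bounded_functional H (fun x => Cmul c (phi x)).
Proof.
  intros [[pa ps] [K [hK0 hK]]]. split; [split|].
  - intros x y. rewrite pa. ring.
  - intros a x. rewrite ps. ring.
  - exists (Cnorm c * K). split; [apply Rmult_le_pos; auto; apply Cnorm_ge0|]. intro x.
    rewrite Cnorm_mul, Rmult_assoc. apply Rmult_le_compat_l; [apply Cnorm_ge0 | auto].
Qed.

Lemma bf_zero : bounded_functional H (fun _ => C0).
Proof.
  split; [split; intros; ring|]. exists 0. split; [lra|]. intro x. rewrite Cnorm_0. lra.
Qed.

Lemma bf_add phi psi : bounded_functional H phi -> bounded_functional H psi ->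
  bounded_functional H (fun x => Cadd (phi x) (psi x)).
Proof.
  intros [[pa ps] [K [hK0 hK]]] [[qa qs] [L [hL0 hL]]]. split; [split|].
  - intros x y. rewrite pa, qa. ring.
  - intros a x. rewrite ps, qs. ring.
  - exists (K + L). split; [lra|]. intro x. eapply Rle_trans; [apply Cnorm_triangle|].
    pose proof (hK x). pose proof (hL x). lra.
Qed.

Lemma bounded_rank_one phi Q : bounded_functional H phi -> bounded_op H (fun x => sc (phi x) Q).
Proof.
  intros [[pa ps] [K [hK0 hK]]]. split; [split|].
  - intros x y. rewrite pa, hscal_adds. auto.
  - intros a x. rewrite ps, hscal_assoc. auto.
  - exists (K * hn Q). intro x. rewrite hnorm_scal.
    replace (K * hn Q * hn x) with (K * hn x * hn Q) by ring.
    apply Rmult_le_compat_r; [apply hnorm_ge0 | auto].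
Qed.

Lemma adjoint_spec (A : V -> V) : bounded_op H A -> is_adjoint H A (adjoint H A).
Proof.
  intros hA.
  assert (ex : forall z, exists w, forall x, ip (A x) z = ip x w).
  { intro z. apply (riesz H (fun x => ip (A x) z)). exact (bf_comp _ A (bf_ip z) hA). }
  unfold adjoint. apply epsilon_spec.
  exists (fun z => epsilon (inhabits 0v) (fun w => forall x, ip (A x) z = ip x w)).
  intros x z. exact (epsilon_spec (inhabits 0v) (fun w => forall x, ip (A x) z = ip x w) (ex z) x).
Qed.

Lemma adjoint_sym (A S : V -> V) : is_adjoint H A S -> is_adjoint H S A.
Proof. intros h x y. rewrite (hinner_conj H y (S x)), <- h, (hinner_conj H (A y) x). auto. Qed.

Lemma adjoint_bounded (A S : V -> V) : bounded_op H A -> is_adjoint H A S -> bounded_op H S.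
Proof.
  intros [_ hb] hadj. split; [split|].
  - intros x y. apply ip_ext. intro z. rewrite <- hadj, !ip_addr, <- !hadj. reflexivity.
  - intros a x. apply ip_ext. intro z. rewrite <- hadj, !ip_scalr, <- hadj. reflexivity.
  - destruct (bound_nonneg A hb) as [M [hM0 hM]]. exists M. intro z.
    (* |S z|^2 = <A S z, z> <= |A S z| |z| <= M |S z| |z| *)
    assert (hsq : Nv (S z) <= hn (A (S z)) * hn z) by (unfold Nv; rewrite <- hadj; apply fst_ip_le).
    pose proof (hM (S z)). pose proof (hnorm_sq H (S z)). pose proof (hnorm_ge0 H (S z)).
    pose proof (hnorm_ge0 H z). pose proof (hnorm_ge0 H (A (S z))).
    destruct (Req_dec (hn (S z)) 0) as [h0|h0]; [rewrite h0; nra|].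
    apply Rmult_le_reg_l with (hn (S z)); nra.
Qed.

End Operators.

(** * Spectra of operators of rank at most two *)

Definition char2 (k11 k12 k21 k22 w : CC) : CC :=
  Csub (Cmul (Csub w k11) (Csub w k22)) (Cmul k12 k21).

Lemma char2_eigvec k11 k12 k21 k22 mu : char2 k11 k12 k21 k22 mu = C0 ->
  exists c1 c2, (c1 <> C0 \/ c2 <> C0) /\
    Cadd (Cmul k11 c1) (Cmul k12 c2) = Cmul mu c1 /\
    Cadd (Cmul k21 c1) (Cmul k22 c2) = Cmul mu c2.
Proof.
  unfold char2. intro hc.
  destruct (classic (k12 = C0 /\ Csub mu k11 = C0)) as [[e1 e2]|hne].
  - apply Ceq_of_sub in e2. subst k12 mu.
    destruct (classic (Csub k11 k22 = C0 /\ k21 = C0)) as [[f1 f2]|hne'].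
    + exists C1, C0. split; [left; exact C1_neq_C0|]. subst k21. split; ring.
    + exists (Csub k11 k22), k21. split; [apply not_and_or in hne'; tauto|]. split; ring.
  - exists k12, (Csub mu k11). split; [apply not_and_or in hne; tauto|]. split; [ring|].
    apply Ceq_of_sub.
    replace (Csub (Cadd (Cmul k21 k12) (Cmul k22 (Csub mu k11))) (Cmul mu (Csub mu k11)))
      with (Copp (Csub (Cmul (Csub mu k11) (Csub mu k22)) (Cmul k12 k21))) by ring.
    rewrite hc. ring.
Qed.

Lemma char2_trace_zero k11 k12 k21 k22 lam w :
  Cadd k11 k22 = C0 ->
  Cmul lam lam = Copp (Csub (Cmul k11 k22) (Cmul k12 k21)) ->
  char2 k11 k12 k21 k22 w = Cmul (Csub w lam) (Cadd w lam).
Proof.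
  intros htr hl. assert (hk22 : k22 = Copp k11) by (apply Ceq_of_sub; rewrite <- htr; ring).
  subst k22. unfold char2. transitivity (Csub (Cmul w w) (Cmul lam lam)); [rewrite hl|]; ring.
Qed.

Section Spectrum.
Variable H : CHilbert.
Local Notation V := (hv H).
Local Notation "0v" := (hzero H).
Local Notation add := (hadd H).
Local Notation sc := (hscal H).

Lemma spectrum_eigen (T : V -> V) z v : v <> 0v -> T v = sc z v -> spectrum H T z.
Proof.
  intros hv hT [S [[hl _] [h1 _]]]. specialize (h1 v).
  rewrite hT, hadd_opp, (lin_zero H S hl) in h1. auto.
Qed.

Lemma spectral_radius_attained (T : V -> V) z :
  (forall w, spectrum H T w -> Cnorm w <= Cnorm z) -> spectrum H T z ->
  spectral_radius H T (Cnorm z).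
Proof.
  intros h1 h2. split.
  - intros t [w [hw ->]]. auto.
  - intros b hb. apply hb. exists z; auto.
Qed.

Lemma kernel_nontrivial phi : dim_ge2 H -> lin_fun H phi -> exists v, v <> 0v /\ phi v = C0.
Proof.
  intros [x [y hxy]] [ha hs].
  destruct (classic (phi x = C0 /\ phi y = C0)) as [[h1 h2]|hn0].
  - exists x. split; auto. intro e. destruct (hxy C1 C0) as [h _].
    + rewrite e, scal0, scalv0, hadd_0. auto.
    + apply C1_neq_C0; auto.
  - exists (add (sc (phi y) x) (sc (Copp (phi x)) y)). split.
    + intro e. apply hxy in e. destruct e as [e1 e2]. apply hn0. split; auto.
      replace (phi x) with (Copp (Copp (phi x))) by ring. rewrite e2. ring.
    + rewrite ha, !hs. ring.
Qed.

Definition comb3 (a b c : CC) (x y z : V) : V := add (sc a x) (add (sc b y) (sc c z)).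

Lemma comb3_add a b c a' b' c' x y z :
  add (comb3 a b c x y z) (comb3 a' b' c' x y z) = comb3 (Cadd a a') (Cadd b b') (Cadd c c') x y z.
Proof. unfold comb3. rewrite add_swap4, (add_swap4 H (sc b y)), !hscal_adds. reflexivity. Qed.

Lemma comb3_scal k a b c x y z :
  sc k (comb3 a b c x y z) = comb3 (Cmul k a) (Cmul k b) (Cmul k c) x y z.
Proof. unfold comb3. rewrite !hscal_addv, !hscal_assoc. reflexivity. Qed.

Lemma comb3_C0 b c x y z : comb3 C0 b c x y z = add (sc b y) (sc c z).
Proof. unfold comb3. rewrite scal0, add0l. reflexivity. Qed.

Lemma comb3_first a b c x y z u : comb3 a b c u y z = add (sc a u) (comb3 C0 b c x y z).
Proof. rewrite comb3_C0. reflexivity. Qed.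

Lemma comb3_eq_x a b c x y z : a = C1 -> b = C0 -> c = C0 -> comb3 a b c x y z = x.
Proof. intros -> -> ->. unfold comb3. rewrite hscal_1, !scal0, hadd_0, hadd_0. reflexivity. Qed.

Lemma lin_fun_comb3 phi a b c x y z : lin_fun H phi ->
  phi (comb3 a b c x y z) = Cadd (Cmul a (phi x)) (Cadd (Cmul b (phi y)) (Cmul c (phi z))).
Proof. intros [ha hs]. unfold comb3. rewrite !ha, !hs. reflexivity. Qed.

Section RankTwo.
Variables (phi1 phi2 : V -> CC) (Q1 Q2 : V) (T : V -> V).
Hypothesis bf1 : bounded_functional H phi1.
Hypothesis bf2 : bounded_functional H phi2.
Hypothesis hT : forall x, T x = add (sc (phi1 x) Q1) (sc (phi2 x) Q2).

(** The characteristic polynomial of the matrix [(phi_i Q_j)], which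
    represents [T] on [span {Q1, Q2}]. *)
Let K_char := char2 (phi1 Q1) (phi1 Q2) (phi2 Q1) (phi2 Q2).

(** Off the roots of the characteristic polynomial and 0, [T - w] is invertible:
    its inverse is [-1/w] plus the rank-two correction [x |-> b1(x) Q1 + b2(x) Q2]
    with [(b1, b2) = -1/w (w - K)^-1 (phi1, phi2)]. *)
Lemma rank_two_resolvent w : w <> C0 -> K_char w <> C0 -> ~ spectrum H T w.
Proof.
  intros hw hD hs. apply hs. clear hs.
  set (D := K_char w) in hD. unfold K_char, char2 in D.
  set (a := Copp (Cinv w)).
  set (b1 := fun x => Cadd (Cmul (Cmul a (Cdiv (Csub w (phi2 Q2)) D)) (phi1 x))
                           (Cmul (Cmul a (Cdiv (phi1 Q2) D)) (phi2 x))).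
  set (b2 := fun x => Cadd (Cmul (Cmul a (Cdiv (phi2 Q1) D)) (phi1 x))
                           (Cmul (Cmul a (Cdiv (Csub w (phi1 Q1)) D)) (phi2 x))).
  assert (hb1 : bounded_functional H b1) by (apply bf_add; apply bf_scal; auto).
  assert (hb2 : bounded_functional H b2) by (apply bf_add; apply bf_scal; auto).
  assert (hTw : forall x, add (T x) (hopp H (sc w x)) = comb3 (Copp w) (phi1 x) (phi2 x) x Q1 Q2).
  { intro x. rewrite hT, <- (comb3_C0 _ _ x), hadd_comm, (comb3_first (Copp w) _ _ x).
    rewrite opp_scal, hscal_assoc. do 2 f_equal. ring. }
  exists (fun x => comb3 a (b1 x) (b2 x) x Q1 Q2). split; [|split].
  - apply bounded_add; [apply bounded_scal, bounded_id|].
    apply bounded_add; apply bounded_rank_one; auto.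
  - intro x. cbv beta. rewrite hTw, (comb3_first _ _ _ x), comb3_scal, comb3_add.
    rewrite !(lin_fun_comb3 _ _ _ _ _ _ _ (proj1 hb1)), !(lin_fun_comb3 _ _ _ _ _ _ _ (proj1 hb2)).
    apply comb3_eq_x; unfold b1, b2, a, Cdiv, D in *; field; auto.
  - intro x. cbv beta. rewrite hTw, (comb3_first _ _ _ x), comb3_scal, comb3_add.
    rewrite (lin_fun_comb3 _ _ _ _ _ _ _ (proj1 bf1)), (lin_fun_comb3 _ _ _ _ _ _ _ (proj1 bf2)).
    apply comb3_eq_x; unfold b1, b2, a, Cdiv, D in *; field; auto.
Qed.

Lemma rank_two_eigen mu : mu <> C0 -> K_char mu = C0 -> spectrum H T mu.
Proof.
  intros hmu hc. destruct (char2_eigvec _ _ _ _ _ hc) as [c1 [c2 [hnz [e1 e2]]]].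
  set (v := add (sc c1 Q1) (sc c2 Q2)).
  assert (hv : forall phi, lin_fun H phi -> phi v = Cadd (Cmul (phi Q1) c1) (Cmul (phi Q2) c2)).
  { intros phi [ha hs]. unfold v. rewrite ha, !hs. ring. }
  assert (hv1 : phi1 v = Cmul mu c1) by (rewrite hv by apply bf1; exact e1).
  assert (hv2 : phi2 v = Cmul mu c2) by (rewrite hv by apply bf2; exact e2).
  apply (spectrum_eigen T mu v).
  - intro e. rewrite e, lin_fun_0 in hv1, hv2 by (apply bf1 || apply bf2).
    destruct hnz as [h|h]; apply h.
    + destruct (Cmul_eq0 mu c1) as [|]; auto; [congruence].
    + destruct (Cmul_eq0 mu c2) as [|]; auto; [congruence].
  - rewrite hT, hv1, hv2. unfold v. rewrite hscal_addv, !hscal_assoc. reflexivity.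
Qed.

End RankTwo.

Lemma rank_one_periph_singleton (phi : V -> CC) (Q : V) (T : V -> V) :
  dim_ge2 H -> bounded_functional H phi -> (forall x, T x = sc (phi x) Q) ->
  periph_singleton H T.
Proof.
  intros hdim hphi hT. set (mu := phi Q).
  (* view T as a rank-two operator whose second functional vanishes *)
  assert (hT2 : forall x, T x = add (sc (phi x) Q) (sc ((fun _ => C0) x) Q))
    by (intro x; rewrite hT, scal0, hadd_0; auto).
  assert (s0 : spectrum H T C0).
  { destruct (kernel_nontrivial phi hdim (proj1 hphi)) as [v [hv hv0]].
    apply (spectrum_eigen T C0 v hv). rewrite hT, hv0, !scal0. auto. }
  assert (smu : spectrum H T mu).
  { destruct (classic (Q = 0v)) as [hq|hq].
    - unfold mu. rewrite hq, lin_fun_0 by apply hphi. auto.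
    - apply (spectrum_eigen T mu Q hq). rewrite hT. auto. }
  assert (sout : forall w, w <> C0 -> w <> mu -> ~ spectrum H T w).
  { intros w hw0 hwm. apply (rank_two_resolvent _ _ Q Q T hphi (bf_zero H) hT2 w hw0).
    unfold char2. fold mu. intro e.
    replace (Csub (Cmul (Csub w mu) (Csub w C0)) (Cmul mu C0)) with (Cmul (Csub w mu) w) in e by ring.
    destruct (Cmul_eq0 _ _ e) as [e'|e']; [apply hwm, Ceq_of_sub | apply hw0]; auto. }
  assert (hrad : spectral_radius H T (Cnorm mu)).
  { apply spectral_radius_attained; auto. intros w hw.
    destruct (classic (w = C0)) as [->|e]; [rewrite Cnorm_0; apply Cnorm_ge0|].
    destruct (classic (w = mu)) as [->|e']; [lra|]. exfalso; exact (sout w e e' hw). }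
  exists mu. intro w. split.
  - intros [hs hr]. pose proof (is_lub_u _ _ _ hr hrad) as en.
    destruct (classic (w = mu)) as [|e']; auto.
    destruct (classic (w = C0)) as [e|e]; [| exfalso; exact (sout w e e' hs)].
    rewrite e, Cnorm_0 in en. apply eq_sym, Cnorm_eq0 in en. congruence.
  - intros ->. split; auto.
Qed.

(** A rank-two operator whose 2x2 matrix has trace 0 and nonzero determinant has
    spectrum inside [{0, lam, -lam}] with [lam <> 0] both eigenvalues, so its
    peripheral spectrum [{lam, -lam}] is not a singleton. *)
Lemma rank_two_not_periph_singleton (phi1 phi2 : V -> CC) (Q1 Q2 : V) (T : V -> V) :
  bounded_functional H phi1 -> bounded_functional H phi2 ->
  (forall x, T x = add (sc (phi1 x) Q1) (sc (phi2 x) Q2)) ->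
  Cadd (phi1 Q1) (phi2 Q2) = C0 ->
  Csub (Cmul (phi1 Q1) (phi2 Q2)) (Cmul (phi1 Q2) (phi2 Q1)) <> C0 ->
  ~ periph_singleton H T.
Proof.
  intros bf1 bf2 hT htr hdet.
  destruct (Csqrt_ex (Copp (Csub (Cmul (phi1 Q1) (phi2 Q2)) (Cmul (phi1 Q2) (phi2 Q1))))) as [lam hlam].
  pose proof (fun w => char2_trace_zero _ _ _ _ lam w htr hlam) as hchar.
  assert (hl0 : lam <> C0).
  { intros ->. apply hdet.
    replace (Csub (Cmul (phi1 Q1) (phi2 Q2)) (Cmul (phi1 Q2) (phi2 Q1))) with (Copp (Cmul C0 C0))
      by (rewrite hlam; ring). ring. }
  assert (s1 : spectrum H T lam) by (apply (rank_two_eigen _ _ _ _ _ bf1 bf2 hT); rewrite ?hchar; auto; ring).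
  assert (s2 : spectrum H T (Copp lam)).
  { apply (rank_two_eigen _ _ _ _ _ bf1 bf2 hT); [|rewrite hchar; ring].
    intro e. apply hl0. replace lam with (Copp (Copp lam)) by ring. rewrite e. ring. }
  assert (sout : forall w, w <> C0 -> w <> lam -> w <> Copp lam -> ~ spectrum H T w).
  { intros w hw0 hw1 hw2. apply (rank_two_resolvent _ _ _ _ _ bf1 bf2 hT w hw0).
    rewrite hchar. intro e. destruct (Cmul_eq0 _ _ e) as [e'|e'].
    - apply hw1, Ceq_of_sub; auto.
    - apply hw2, Ceq_of_sub. rewrite <- e'. ring. }
  assert (hrad : spectral_radius H T (Cnorm lam)).
  { apply spectral_radius_attained; auto. intros w hw.
    destruct (classic (w = C0)) as [->|e]; [rewrite Cnorm_0; apply Cnorm_ge0|].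
    destruct (classic (w = lam)) as [->|e']; [lra|].
    destruct (classic (w = Copp lam)) as [->|e'']; [rewrite Cnorm_opp; lra|].
    exfalso; exact (sout w e e' e'' hw). }
  intros [z hz].
  assert (z1 : lam = z) by (apply hz; split; auto).
  assert (z2 : Copp lam = z) by (apply hz; split; auto; rewrite Cnorm_opp; auto).
  apply hl0, C_eq_opp_0. congruence.
Qed.

End Spectrum.

(** * Linear independence and biorthogonal systems *)

Fixpoint zipadd (a b : list CC) : list CC :=
  match a, b with x :: a', y :: b' => Cadd x y :: zipadd a' b' | _, _ => [] end.

Lemma length_zipadd a b : length a = length b -> length (zipadd a b) = length a.
Proof. revert b; induction a; intros [|y b]; simpl; intros; auto; discriminate. Qed.

Section Biorthogonal.
Variable H : CHilbert.
Local Notation V := (hv H).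
Local Notation "0v" := (hzero H).
Local Notation add := (hadd H).
Local Notation sc := (hscal H).
Local Notation ip := (hinner H).
Local Notation lc := (lincomb H).

Lemma lc_add ys : forall cs ds, length cs = length ys -> length ds = length ys ->
  add (lc cs ys) (lc ds ys) = lc (zipadd cs ds) ys.
Proof.
  induction ys as [|y ys IH]; intros [|c cs] [|d ds]; simpl; intros h1 h2; try discriminate.
  - apply hadd_0.
  - injection h1; injection h2; intros e2 e1.
    rewrite <- (IH cs ds e1 e2), hscal_adds. apply add_swap4.
Qed.

Lemma lc_scal a ys : forall cs, sc a (lc cs ys) = lc (map (Cmul a) cs) ys.
Proof.
  induction ys as [|y ys IH]; intros [|c cs]; simpl; try apply scalv0.
  rewrite hscal_addv, hscal_assoc, IH. reflexivity.
Qed.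

Lemma lc_opp ys cs : hopp H (lc cs ys) = lc (map Copp cs) ys.
Proof.
  rewrite opp_scal, lc_scal. f_equal. apply map_ext. intro a. apply Ceq; simpl; ring.
Qed.

Definition indepL (l : list V) : Prop :=
  forall cs, length cs = length l -> lc cs l = 0v -> Forall (fun c => c = C0) cs.

Definition in_span (l : list V) (p : V) : Prop :=
  exists cs, length cs = length l /\ p = lc cs l.

Lemma indepL_tail v l : indepL (v :: l) -> indepL l.
Proof.
  intros h cs hl e. specialize (h (C0 :: cs)). simpl in h.
  rewrite scal0, add0l in h. specialize (h (f_equal S hl) e). inversion h; auto.
Qed.

Lemma in_span_add l p q : in_span l p -> in_span l q -> in_span l (add p q).
Proof.
  intros [cs [hc ->]] [ds [hd ->]]. exists (zipadd cs ds).
  rewrite length_zipadd by congruence. split; auto. apply lc_add; auto.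
Qed.

Lemma in_span_scal l c p : in_span l p -> in_span l (sc c p).
Proof. intros [cs [hc ->]]. exists (map (Cmul c) cs). rewrite length_map, lc_scal. auto. Qed.

Lemma in_span_cons v l p : in_span l p -> in_span (v :: l) p.
Proof. intros [cs [hc ->]]. exists (C0 :: cs). simpl. rewrite scal0, add0l. auto. Qed.

Lemma in_span_head v l : in_span (v :: l) v.
Proof.
  exists (C1 :: map (fun _ => C0) l). simpl. rewrite length_map, hscal_1. split; auto.
  rewrite <- (hadd_0 H v) at 1. f_equal. induction l as [|u l IH]; simpl; auto.
  rewrite scal0, add0l. auto.
Qed.

Lemma orth_span l q p : Forall (fun u => ip u q = C0) l -> in_span l p -> ip p q = C0.
Proof.
  intros hf [cs [_ ->]]. revert cs. induction hf as [|u l hu _ IH]; intros [|c cs]; simpl;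
    try apply ip_0l.
  rewrite hinner_addl, hinner_scall, hu, IH. ring.
Qed.

Lemma indep_head_not_in_span v l q : indepL (v :: l) -> in_span l q -> add v (hopp H q) <> 0v.
Proof.
  intros hind [cs [hc ->]] e.
  assert (h : Forall (fun c => c = C0) (C1 :: map Copp cs)).
  { apply hind; simpl; [rewrite length_map; auto|]. rewrite hscal_1, <- lc_opp. exact e. }
  inversion h. apply C1_neq_C0; auto.
Qed.

Lemma gram_schmidt_step v l q0 : indepL (v :: l) -> in_span l q0 ->
  Forall2 (fun u t => ip u q0 = t) l (map (fun u => ip u v) l) ->
  let q := add v (hopp H q0) in
  Forall (fun u => ip u q = C0) l /\ q <> 0v /\ ip v q = RC (Nv H q) /\ in_span (v :: l) q.
Proof.
  intros hind hq0s hq0 q.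
  assert (horth : Forall (fun u => ip u q = C0) l).
  { clear -hq0. unfold q. induction l as [|u l IHl]; simpl in *; [constructor|].
    apply Forall2_cons_iff in hq0 as [hu hl]. constructor; auto.
    rewrite ip_addr, ip_oppr, hu. ring. }
  split; [exact horth | split; [|split]].
  - exact (indep_head_not_in_span _ _ _ hind hq0s).
  - rewrite <- ip_self. replace v with (add q q0) at 1
      by (unfold q; rewrite <- hadd_assoc, (hadd_comm _ (hopp H q0)), hadd_opp, hadd_0; auto).
    rewrite hinner_addl, (orth_span l q q0 horth hq0s). ring.
  - apply in_span_add; [apply in_span_head|].
    rewrite opp_scal. apply in_span_scal, in_span_cons; auto.
Qed.

(** Dual functionals: for an independent family [v_i] and any targets [t_i]
    there is a vector [p] in its span with [<v_i, p> = t_i]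
    (by induction on the family, adding a multiple of the Gram-Schmidt
    residual of the new vector). *)
Lemma biorthogonal_span l : indepL l -> forall ts, length ts = length l ->
  exists p, in_span l p /\ Forall2 (fun v t => ip v p = t) l ts.
Proof.
  induction l as [|v l IH]; intros hind ts hts.
  - destruct ts; [|discriminate]. exists 0v. split; [exists []; auto | constructor].
  - pose proof (indepL_tail _ _ hind) as hind'.
    destruct (IH hind' (map (fun u => ip u v) l) (length_map _ _)) as [q0 [hq0s hq0]].
    destruct (gram_schmidt_step v l q0 hind hq0s hq0) as [horth [hq [hvq hqs]]].
    set (q := add v (hopp H q0)) in *.
    pose proof (Nv_pos H q hq) as hN.
    destruct ts as [|t ts]; [discriminate|]. injection hts as hts.
    destruct (IH hind' ts hts) as [p0 [hp0s hp0]].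
    set (beta := Cconj (Cdiv (Csub t (ip v p0)) (RC (Nv H q)))).
    exists (add p0 (sc beta q)). split.
    + apply in_span_add; [apply in_span_cons | apply in_span_scal]; auto.
    + constructor.
      * rewrite ip_addr, ip_scalr, hvq. unfold beta. rewrite Cconj_invol.
        assert (RC (Nv H q) <> C0) by (unfold RC, C0; intro e; injection e; lra).
        field. auto.
      * clear -hp0 horth. induction hp0 as [|u t' l' ts' hu _ IHp]; constructor;
          apply Forall_cons_iff in horth as [hqu hrest]; auto.
        rewrite ip_addr, ip_scalr, hu, hqu. ring.
Qed.

Corollary biorthogonal l ts : indepL l -> length ts = length l ->
  exists p, Forall2 (fun v t => ip v p = t) l ts.
Proof. intros h hl. destruct (biorthogonal_span l h ts hl) as [p [_ hp]]. eauto. Qed.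

Lemma indep2_iff u v :
  indepL [u; v] <-> (forall a b, add (sc a u) (sc b v) = 0v -> a = C0 /\ b = C0).
Proof.
  split.
  - intros h a b e. assert (hl : lc [a;b] [u;v] = 0v) by (simpl; rewrite hadd_0; auto).
    apply h in hl; auto. inversion hl as [|? ? ha hb]; inversion hb; auto.
  - intros h [|a [|b [|c cs]]] hl e; try discriminate. simpl in e. rewrite hadd_0 in e.
    apply h in e. destruct e; subst. repeat constructor.
Qed.

Lemma solve_for_last c w (z : V) : c <> C0 -> add z (sc c w) = 0v ->
  w = sc (Copp (Cinv c)) z.
Proof.
  intros hc e. apply (f_equal (sc (Copp (Cinv c)))) in e.
  rewrite scalv0, hscal_addv, hscal_assoc in e.
  replace (Cmul (Copp (Cinv c)) c) with (Copp C1) in e by (field; auto).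
  rewrite <- opp_scal in e. apply (f_equal (fun y => add y w)) in e.
  rewrite add0l, <- hadd_assoc, (hadd_comm _ (hopp H w)), hadd_opp, hadd_0 in e. auto.
Qed.

Lemma dependent_third u v w : indepL [u; v] -> ~ indepL [u; v; w] ->
  exists a b, w = add (sc a u) (sc b v).
Proof.
  intros hi hn. apply NNPP. intro hno. apply hn.
  intros [|c1 [|c2 [|c3 [|c4 cs]]]] hl e; try discriminate. simpl in e. rewrite hadd_0, hadd_assoc in e.
  destruct (classic (c3 = C0)) as [->|h3].
  - rewrite scal0, hadd_0 in e. apply (proj1 (indep2_iff u v) hi) in e as [-> ->]. repeat constructor.
  - exfalso. apply hno. apply solve_for_last in e; auto. rewrite e, hscal_addv, !hscal_assoc. eauto.
Qed.

Lemma dependent_second u v : ~ indepL [u; v] -> u <> 0v -> exists c, v = sc c u.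
Proof.
  intros hn hu. rewrite indep2_iff in hn. apply NNPP. intro hc. apply hn. intros a b e.
  destruct (classic (b = C0)) as [->|hb].
  - rewrite scal0, hadd_0 in e. split; auto. apply NNPP. intro ha. apply hu.
    rewrite <- (add0l H (sc a u)) in e. apply solve_for_last in e; auto. rewrite e. apply scalv0.
  - exfalso. apply hc. apply solve_for_last in e; auto. rewrite e, hscal_assoc. eauto.
Qed.

End Biorthogonal.

(** * A traceless two-dimensional frame for an operator of rank at least two *)

Section Frame.
Variable H : CHilbert.
Local Notation V := (hv H).
Local Notation "0v" := (hzero H).
Local Notation add := (hadd H).
Local Notation sc := (hscal H).
Local Notation ip := (hinner H).

Variable S : V -> V.
Hypothesis S_lin : linear_op H S.

(** Vectors [e1, e2] with dual vectors [p1, p2] and a scalar [d] such that the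
    matrix [M_ij = <S e_j, p_i>] satisfies [M11 + d^n M22 = 0] and
    [d^n det M <> 0]: these are exactly the trace and determinant of the 2x2
    matrix of [B^r S B^s] for [B x = <x,p1> e1 + d <x,p2> e2] and [r + s = n]. *)
Definition traceless_frame (n : nat) : Prop :=
  exists e1 e2 p1 p2 d,
    ip e1 p1 = C1 /\ ip e2 p1 = C0 /\ ip e1 p2 = C0 /\ ip e2 p2 = C1 /\
    Cadd (ip (S e1) p1) (Cmul (Cpow d n) (ip (S e2) p2)) = C0 /\
    Cmul (Cpow d n) (Csub (Cmul (ip (S e1) p1) (ip (S e2) p2))
                          (Cmul (ip (S e2) p1) (ip (S e1) p2))) <> C0.

(** Case 1: some [x, S x, S^2 x] are independent; use [e = (x, S x)], [d = 1]. *)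
Lemma frame_cyclic3 x n : indepL H [x; S x; S (S x)] -> traceless_frame n.
Proof.
  intro hind.
  destruct (biorthogonal H _ [C1; C0; C1] hind eq_refl) as [p1 f1].
  destruct (biorthogonal H _ [C0; C1; C0] hind eq_refl) as [p2 f2].
  rewrite !Forall2_cons_iff in f1, f2.
  destruct f1 as (a1 & a2 & a3 & _). destruct f2 as (b1 & b2 & b3 & _).
  exists x, (S x), p1, p2, C1. rewrite Cpow_C1, a2, a3, b2, b3.
  repeat split; auto; [ring|]. intro e. apply Copp_C1_neq_C0. rewrite <- e. ring.
Qed.

(** Case 2: [x, S x] independent and [S^2 x = a x + b S x] with [a <> 0];
    use [e = (x, S x - b/2 x)] and [d^n = -1]. *)
Lemma frame_quadratic x a b n : (1 <= n)%nat -> indepL H [x; S x] -> a <> C0 ->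
  S (S x) = add (sc a x) (sc b (S x)) -> traceless_frame n.
Proof.
  intros hn hi ha e2. destruct (Cpow_root_m1 n hn) as [om hom].
  destruct S_lin as [Sa Ss].
  set (h := Cmul b (Cinv (Cadd C1 C1))).
  set (y := add (S x) (sc (Copp h) x)).
  assert (eSx : S x = add (sc h x) (sc C1 y)).
  { unfold y. rewrite hscal_1, (hadd_comm _ (S x)), hadd_assoc, <- hscal_adds.
    replace (Cadd h (Copp h)) with C0 by ring. rewrite scal0, add0l. auto. }
  assert (eSy : S y = add (sc (Cadd a (Cmul h h)) x) (sc h y)).
  { unfold y at 1. rewrite Sa, Ss, e2, <- hadd_assoc, <- hscal_adds.
    replace (Cadd b (Copp h)) with h
      by (unfold h; field; unfold C1, Cadd, C0; intro e; injection e; lra).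
    rewrite eSx, hscal_addv, !hscal_assoc, hadd_assoc, <- hscal_adds.
    f_equal; f_equal; ring. }
  assert (hiy : indepL H [x; y]).
  { rewrite indep2_iff in *. intros c1 c2 e. unfold y in e.
    rewrite hscal_addv, hscal_assoc, hadd_assoc, (hadd_comm _ (sc c1 x)), <- hadd_assoc,
      <- hscal_adds, hadd_comm in e.
    apply hi in e as [e1 ->]. split; auto. rewrite <- e1. ring. }
  destruct (biorthogonal H _ [C1; C0] hiy eq_refl) as [p1 f1].
  destruct (biorthogonal H _ [C0; C1] hiy eq_refl) as [p2 f2].
  rewrite !Forall2_cons_iff in f1, f2. destruct f1 as (h11 & h21 & _). destruct f2 as (h12 & h22 & _).
  exists x, y, p1, p2, om. rewrite hom, eSy, eSx, !ip_add_sc, h11, h21, h12, h22.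
  repeat split; auto; [ring|]. intro e. apply ha. rewrite <- e. ring.
Qed.

(** Case 3: [S x1, S x2] independent eigenvectors of [S] for the same
    eigenvalue [b <> 0]; use [e = (S x1, S x2)] and [d^n = -1]. *)
Lemma frame_eigen x1 x2 b n : (1 <= n)%nat -> indepL H [S x1; S x2] -> b <> C0 ->
  S (S x1) = sc b (S x1) -> S (S x2) = sc b (S x2) -> traceless_frame n.
Proof.
  intros hn hx hb e1 e2. destruct (Cpow_root_m1 n hn) as [om hom].
  destruct (biorthogonal H _ [C1; C0] hx eq_refl) as [p1 f1].
  destruct (biorthogonal H _ [C0; C1] hx eq_refl) as [p2 f2].
  rewrite !Forall2_cons_iff in f1, f2. destruct f1 as (h11 & h21 & _). destruct f2 as (h12 & h22 & _).
  exists (S x1), (S x2), p1, p2, om. rewrite hom, e1, e2, !hinner_scall, h11, h21, h12, h22.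
  repeat split; auto; [ring|]. intro e. apply hb.
  (* the determinant term is -b^2 *)
  assert (hbb : Cmul b b = C0).
  { transitivity (Copp (Cmul (Copp C1) (Csub (Cmul (Cmul b C1) (Cmul b C1))
                                             (Cmul (Cmul b C0) (Cmul b C0))))); [ring|].
    rewrite e. ring. }
  destruct (Cmul_eq0 _ _ hbb); auto.
Qed.

(** Case 4: [S x1, S x2] independent and killed by [S]; then
    [x1, x2, S x1, S x2] are independent and [e = (x1, x2)], [d = 1] work. *)
Lemma frame_nilpotent x1 x2 n : indepL H [S x1; S x2] ->
  S (S x1) = 0v -> S (S x2) = 0v -> traceless_frame n.
Proof.
  intros hx e1 e2. pose proof S_lin as [Sa Ss]. rewrite indep2_iff in hx.
  assert (hi4 : indepL H [x1; x2; S x1; S x2]).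
  { intros [|a1 [|a2 [|a3 [|a4 [|a5 cs]]]]] hl e; try discriminate. simpl in e.
    rewrite hadd_0 in e.
    assert (eS := f_equal S e). rewrite !Sa, !Ss, e1, e2, !scalv0, !hadd_0, (lin_zero H S S_lin) in eS.
    apply hx in eS as [-> ->]. rewrite !scal0, !add0l in e.
    apply hx in e as [-> ->]. repeat constructor. }
  destruct (biorthogonal H _ [C1; C0; C0; C1] hi4 eq_refl) as [p1 f1].
  destruct (biorthogonal H _ [C0; C1; C1; C0] hi4 eq_refl) as [p2 f2].
  rewrite !Forall2_cons_iff in f1, f2.
  destruct f1 as (a1 & a2 & a3 & a4 & _). destruct f2 as (c1 & c2 & c3 & c4 & _).
  exists x1, x2, p1, p2, C1. rewrite Cpow_C1, a3, a4, c3, c4.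
  repeat split; auto; [ring|]. intro e. apply Copp_C1_neq_C0. rewrite <- e. ring.
Qed.

Lemma square_multiple_of_image :
  ~ (exists x, indepL H [x; S x; S (S x)]) ->
  ~ (exists x a b, indepL H [x; S x] /\ a <> C0 /\ S (S x) = add (sc a x) (sc b (S x))) ->
  forall x, exists b, S (S x) = sc b (S x).
Proof.
  intros notA notB x. pose proof S_lin as [_ Ss].
  destruct (classic (indepL H [x; S x])) as [hi|hni].
  - destruct (dependent_third H _ _ _ hi (fun h => notA (ex_intro _ x h))) as [a [b e]].
    destruct (classic (a = C0)) as [->|ha].
    + exists b. rewrite e, scal0, add0l. auto.
    + exfalso. apply notB. eauto 6.
  - destruct (classic (x = 0v)) as [->|h0].
    + exists C0. rewrite !(lin_zero H S S_lin), scalv0. auto.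
    + destruct (dependent_second H _ _ hni h0) as [c e]. exists c. rewrite e, Ss, e. auto.
Qed.

Lemma common_multiplier x1 x2 : indepL H [S x1; S x2] ->
  (forall x, exists b, S (S x) = sc b (S x)) ->
  exists b, S (S x1) = sc b (S x1) /\ S (S x2) = sc b (S x2).
Proof.
  intros hx hb. pose proof S_lin as [Sa Ss]. rewrite indep2_iff in hx.
  destruct (hb x1) as [b1 e1]. destruct (hb x2) as [b2 e2]. destruct (hb (add x1 x2)) as [b3 e3].
  rewrite !Sa, e1, e2, hscal_addv in e3.
  assert (hz : add (sc (Csub b1 b3) (S x1)) (sc (Csub b2 b3) (S x2)) = 0v).
  { unfold Csub. rewrite !hscal_adds, add_swap4, e3, <- !hscal_addv, <- hscal_adds.
    replace (Cadd b3 (Copp b3)) with C0 by ring. apply scal0. }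
  apply hx in hz as [h1 h2]. apply Ceq_of_sub in h1, h2. subst b1 b2. eauto.
Qed.

Lemma traceless_frame_exists n : (1 <= n)%nat ->
  (exists x1 x2, indepL H [S x1; S x2]) -> traceless_frame n.
Proof.
  intros hn [x1 [x2 hx]].
  destruct (classic (exists x, indepL H [x; S x; S (S x)])) as [[x hA]|notA].
  { exact (frame_cyclic3 x n hA). }
  destruct (classic (exists x a b, indepL H [x; S x] /\ a <> C0 /\
                       S (S x) = add (sc a x) (sc b (S x)))) as [[x [a [b [hi [ha e]]]]]|notB].
  { exact (frame_quadratic x a b n hn hi ha e). }
  destruct (common_multiplier x1 x2 hx (square_multiple_of_image notA notB)) as [b [e1 e2]].
  destruct (classic (b = C0)) as [->|hb].
  - rewrite scal0 in e1, e2. exact (frame_nilpotent x1 x2 n hx e1 e2).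
  - exact (frame_eigen x1 x2 b n hn hx hb e1 e2).
Qed.

End Frame.

(** * The two directions of Lemma 3.3 *)

Section Main.
Variable H : CHilbert.
Local Notation V := (hv H).
Local Notation "0v" := (hzero H).
Local Notation add := (hadd H).
Local Notation sc := (hscal H).
Local Notation ip := (hinner H).

Lemma rank_le1_form (A : V -> V) : rank_le H 1 A -> exists y, forall x, exists c, A x = sc c y.
Proof.
  intros [[|y [|y' ys]] [hl h]]; try discriminate. exists y. intro x.
  destruct (h x) as [[|c [|c' cs]] [hcl e]]; try discriminate. exists c. rewrite e. simpl. apply hadd_0.
Qed.

Lemma rank_one_adjoint (A S : V -> V) (y : V) :
  (forall x, exists c, A x = sc c y) -> is_adjoint H A S -> exists w, forall z, S z = sc (ip z y) w.
Proof.
  intros hA hadj.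
  destruct (classic (y = 0v)) as [->|hy].
  - exists 0v. intro z. rewrite scalv0. apply ip_ext. intro x. rewrite <- hadj, ip_0r.
    destruct (hA x) as [c ->]. rewrite scalv0, ip_0l. auto.
  - pose proof (Nv_pos H y hy) as hN.
    set (y0 := sc (RC (/ Nv H y)) y).
    assert (hyy0 : ip y y0 = C1).
    { unfold y0. rewrite ip_scalr, ip_self. unfold RC, C1. apply Ceq; simpl; field; lra. }
    exists (S y0). intro z. apply ip_ext. intro x.
    rewrite ip_scalr, <- !hadj. destruct (hA x) as [c ->]. rewrite !hinner_scall, hyy0.
    rewrite (hinner_conj H y z), Cconj_invol. ring.
Qed.

Lemma adjoint_rank_ge2 (A S : V -> V) : is_adjoint H A S -> linear_op H S -> ~ rank_le H 1 A ->
  exists x1 x2, indepL H [S x1; S x2].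
Proof.
  intros hadj hS hA. apply NNPP. intro hn0. apply hA.
  destruct (classic (forall z, S z = 0v)) as [hz|hz].
  - exists [0v]. split; auto. intro x. exists [C0]. split; auto. simpl. rewrite scal0, hadd_0.
    apply ip_ext_l. intro z. rewrite hadj, hz, ip_0r, ip_0l. auto.
  - apply not_all_ex_not in hz as [z0 hz0].
    assert (hS1 : forall z, exists c, S z = sc c (S z0)).
    { intro z. apply dependent_second; auto. intro hi. apply hn0. eauto. }
    destruct (rank_one_adjoint S A (S z0) hS1 (adjoint_sym H A S hadj)) as [w hw].
    exists [w]. split; auto. intro x. exists [ip x (S z0)]. split; auto. simpl. rewrite hadd_0. auto.
Qed.

Lemma rank_one_periph (Alg : (V -> V) -> Prop) r s (A : V -> V) :
  dim_ge2 H -> standard_op_alg H Alg -> Alg A -> rank_one H A ->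
  forall B, Alg B -> periph_singleton H (fun x => opow H r B (adjoint H A (opow H s B x))).
Proof.
  intros hdim [hbd _] hA [h1 _] B hB.
  destruct (rank_le1_form A h1) as [y hy].
  destruct (rank_one_adjoint A _ y hy (adjoint_spec H A (hbd A hA))) as [w hw].
  apply (rank_one_periph_singleton H (fun x => ip (opow H s B x) y) (opow H r B w) _ hdim).
  - exact (bf_comp H _ _ (bf_ip H y) (bounded_opow H B s (hbd B hB))).
  - intro x. rewrite hw, (proj2 (proj1 (bounded_opow H B r (hbd B hB)))). reflexivity.
Qed.

Section FrameOperator.
Variables (e1 e2 p1 p2 : V) (d : CC).
Hypotheses (h11 : ip e1 p1 = C1) (h21 : ip e2 p1 = C0) (h12 : ip e1 p2 = C0) (h22 : ip e2 p2 = C1).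

(** The rank-two operator [B x = <x,p1> e1 + d <x,p2> e2], diagonal in the
    biorthogonal frame with eigenvalues [1] and [d]. *)
Definition frame_op (x : V) : V := add (sc (ip x p1) e1) (sc (Cmul d (ip x p2)) e2).

Lemma frame_op_bounded : bounded_op H frame_op.
Proof. apply bounded_add; apply bounded_rank_one; [|apply bf_scal]; apply bf_ip. Qed.

Lemma frame_op_rank_le2 : rank_le H 2 frame_op.
Proof.
  exists [e1; e2]. split; auto. intro x. exists [ip x p1; Cmul d (ip x p2)]. split; auto.
  unfold frame_op; simpl. rewrite hadd_0. auto.
Qed.

Lemma frame_op_pow k x :
  opow H (S k) frame_op x = add (sc (ip x p1) e1) (sc (Cmul (Cpow d (S k)) (ip x p2)) e2).
Proof.
  induction k as [|k IH].
  - simpl. unfold frame_op. do 3 f_equal. ring.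
  - change (opow H (S (S k)) frame_op x) with (frame_op (opow H (S k) frame_op x)).
    rewrite IH. unfold frame_op. rewrite !ip_add_sc, h11, h21, h12, h22. simpl.
    f_equal; f_equal; ring.
Qed.

Lemma frame_op_pow_e1 k : opow H k frame_op e1 = e1.
Proof.
  destruct k as [|k]; [reflexivity|]. rewrite frame_op_pow, h11, h12.
  replace (Cmul (Cpow d (S k)) C0) with C0 by ring. rewrite hscal_1, scal0, hadd_0. reflexivity.
Qed.

Lemma frame_op_pow_e2 k : opow H k frame_op e2 = sc (Cpow d k) e2.
Proof.
  destruct k as [|k]; [simpl; rewrite hscal_1; reflexivity|]. rewrite frame_op_pow, h21, h22, scal0, add0l.
  f_equal. ring.
Qed.

(** The compression of [B^r S B^s] to the frame has trace
    [M11 + d^(r+s) M22] and determinant [d^(r+s) det M]; when these are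
    [0] and nonzero its peripheral spectrum is not a singleton. *)
Lemma frame_compression_not_periph_singleton (T : V -> V) r s :
  bounded_op H T -> (1 <= r + s)%nat ->
  Cadd (ip (T e1) p1) (Cmul (Cpow d (r + s)) (ip (T e2) p2)) = C0 ->
  Cmul (Cpow d (r + s)) (Csub (Cmul (ip (T e1) p1) (ip (T e2) p2))
                              (Cmul (ip (T e2) p1) (ip (T e1) p2))) <> C0 ->
  ~ periph_singleton H (fun x => opow H r frame_op (T (opow H s frame_op x))).
Proof.
  intros hT hrs htr hdet. pose proof hT as [[Ta Ts] _].
  destruct r as [|r].
  - destruct s as [|s]; [simpl in hrs; lia|]. rewrite Nat.add_0_l in htr, hdet.
    apply (rank_two_not_periph_singleton H (fun x => ip x p1)
             (fun x => Cmul (Cpow d (S s)) (ip x p2)) (T e1) (T e2)).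
    + apply bf_ip.
    + apply bf_scal, bf_ip.
    + intro x. cbv beta. rewrite frame_op_pow, Ta, !Ts. reflexivity.
    + exact htr.
    + intro e. apply hdet. rewrite <- e. ring.
  - set (TB := fun x => T (opow H s frame_op x)).
    assert (hTB : bounded_op H TB) by exact (bounded_comp H T _ hT (bounded_opow H _ s frame_op_bounded)).
    assert (hTB1 : TB e1 = T e1) by (unfold TB; rewrite frame_op_pow_e1; auto).
    assert (hTB2 : TB e2 = sc (Cpow d s) (T e2)) by (unfold TB; rewrite frame_op_pow_e2, Ts; auto).
    rewrite Cpow_add in htr, hdet.
    apply (rank_two_not_periph_singleton H (fun x => ip (TB x) p1)
             (fun x => Cmul (Cpow d (S r)) (ip (TB x) p2)) e1 e2).
    + exact (bf_comp H _ _ (bf_ip H p1) hTB).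
    + exact (bf_scal H _ _ (bf_comp H _ _ (bf_ip H p2) hTB)).
    + intro x. apply frame_op_pow.
    + rewrite hTB1, hTB2, hinner_scall. rewrite <- htr. ring.
    + rewrite hTB1, hTB2, !hinner_scall. intro e. apply hdet. rewrite <- e. ring.
Qed.

End FrameOperator.

Lemma periph_rank_one (Alg : (V -> V) -> Prop) r s (A : V -> V) :
  standard_op_alg H Alg -> (1 <= r + s)%nat -> Alg A -> ~ (forall x, A x = 0v) ->
  (forall B, Alg B -> rank_le H 2 B ->
     periph_singleton H (fun x => opow H r B (adjoint H A (opow H s B x)))) ->
  rank_one H A.
Proof.
  intros [hbd [_ [_ [_ hfin]]]] hrs hA hA0 h3. split.
  2:{ intros [[|y ys] [hl h]]; [|discriminate]. apply hA0. intro x.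
      destruct (h x) as [[|c cs] [hcl ->]]; [reflexivity | discriminate hcl]. }
  apply NNPP. intro hr1.
  pose proof (adjoint_spec H A (hbd A hA)) as hadj.
  pose proof (adjoint_bounded H A _ (hbd A hA) hadj) as hS.
  destruct (traceless_frame_exists H _ (proj1 hS) (r + s) hrs (adjoint_rank_ge2 A _ hadj (proj1 hS) hr1))
    as [e1 [e2 [p1 [p2 [d [h11 [h21 [h12 [h22 [htr hdet]]]]]]]]]].
  apply (frame_compression_not_periph_singleton e1 e2 p1 p2 d h11 h21 h12 h22 _ r s hS hrs htr hdet).
  apply h3; [| apply frame_op_rank_le2].
  apply hfin; [apply frame_op_bounded | exists 2%nat; apply frame_op_rank_le2].
Qed.

End Main.

Theorem lemma3p3 (H : CHilbert) (Alg : (H -> H) -> Prop) (r s : nat) (A : H -> H) :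
  dim_ge2 H ->
  @standard_op_alg H Alg ->
  (1 <= r + s)%nat ->
  Alg A ->
  ~ (forall x, A x = hzero H) ->
  (@rank_one H A <->
     (forall B, Alg B ->
        @periph_singleton H (fun x => @opow H r B (@adjoint H A (@opow H s B x))))) /\
  (@rank_one H A <->
     (forall B, Alg B -> @rank_le H 2 B ->
        @periph_singleton H (fun x => @opow H r B (@adjoint H A (@opow H s B x))))).
Proof.
  intros hdim hAlg hrs hA hA0.
  pose proof (rank_one_periph H Alg r s A hdim hAlg hA) as forward.
  pose proof (periph_rank_one H Alg r s A hAlg hrs hA hA0) as backward.
  split; split.
  - intros h1 B hB. exact (forward h1 B hB).
  - intro h2. apply backward. intros B hB _. exact (h2 B hB).
  - intros h1 B hB _. exact (forward h1 B hB).
  - exact backward.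
Qed.
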